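(* Let $n\ge 1$ and $\bar\gamma=(\gamma_1,\dots,\gamma_n)\in\mathbb{N}^n$. Let $s_1,\dots,s_n$ be i.i.d. random variables with $\Pr[s_i=k]=2^{-(k+1)}$ for $k=0,1,2,\dots$, and let $A(\bar\gamma)$ be the event that the closed intervals $[s_i,s_i+\gamma_i]$, $i=1,\dots,n$, are pairwise disjoint. Then $$\Pr[A(\bar\gamma)]=\frac{2^{-\left(\binom{n+1}{2}-1\right)}}{\prod_{i=1}^{n-1}\left(1-2^{-(n+1-i)}\right)}\sum_{\sigma\in \mathrm{Sym}_n}\prod_{i=1}^{n-1}2^{-(n-i)\gamma_{\sigma(i)}},$$ where $\mathrm{Sym}_n$ is the set of all permutations of $\{1,\dots,n\}$.
   Context: $\mathbb{N}=\{0,1,2,\dots\}$. *)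

From HB Require Import structures.
From mathcomp Require Import all_boot all_order all_algebra all_fingroup.
Set Implicit Arguments. Unset Strict Implicit. Unset Printing Implicit Defensive.
Import Order.TTheory GRing.Theory Num.Theory.
Local Open Scope ring_scope.

(* The event A(gamma): the closed intervals [s_i, s_i + gamma_i] are pairwise
   disjoint (for integer endpoints, [a,a+g] and [b,b+h] are disjoint iff
   a + g < b or b + h < a). *)
Definition intervals_disjoint (n : nat) (gamma s : 'I_n -> nat) : bool :=
  [forall i : 'I_n, forall j : 'I_n,
     (i != j) ==> ((s i + gamma i < s j)%N || (s j + gamma j < s i)%N)].

Definition point_prob (n : nat) (s : 'I_n -> nat) : rat :=
  \prod_(i < n) (2%:R^-1) ^+ (s i).+1.

Definition trunc_prob (n : nat) (gamma : 'I_n -> nat) (N : nat) : rat :=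
  \sum_(s : {ffun 'I_n -> 'I_N} | intervals_disjoint gamma (fun i => nat_of_ord (s i)))
     point_prob (fun i => nat_of_ord (s i)).

(* Pr[A(gamma)] = l: the (nonnegative, monotone) truncated sums converge to l.
   Since the series has nonnegative terms, this is exactly the probability. *)
Definition prob_A_eq (n : nat) (gamma : 'I_n -> nat) (l : rat) : Prop :=
  forall eps : rat, 0 < eps ->
    exists N0 : nat, forall N : nat, (N0 <= N)%N -> `|trunc_prob gamma N - l| < eps.

(* Right-hand side of the formula (indices shifted to 0-based). *)
Definition rhs_formula (n : nat) (gamma : 'I_n -> nat) : rat :=
  (2%:R^-1) ^+ ('C(n.+1, 2)).-1
  / (\prod_(1 <= i < n) (1 - (2%:R^-1) ^+ (n.+1 - i)))
  * \sum_(sigma : 'S_n) \prod_(i < n) (2%:R^-1) ^+ ((n.-1 - i) * gamma (sigma i)).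

From HB Require Import structures.
From mathcomp Require Import all_boot all_order all_algebra all_fingroup.
From mathcomp Require Import ring zify.
Set Implicit Arguments. Unset Strict Implicit. Unset Printing Implicit Defensive.
Import Order.TTheory GRing.Theory Num.Theory.
Local Open Scope ring_scope.

(* Condition on which intervals start at 0.  If none does, shifting every
   start down by one preserves disjointness and costs a factor q^n, q = 1/2.
   If interval i starts at 0, it is the only one, all others start beyond
   gamma_i, and shifting them down by gamma_i + 1 leaves the same problem for
   the n - 1 remaining lengths.  Hence
     P(gamma) = q^n P(gamma) + sum_i q (q^(gamma_i + 1))^(n-1) P(gamma minus gamma_i),
   and the closed formula satisfies the same equation: split the sum over
   permutations according to sigma(1).  For the truncated sums the equation
   holds with shifted truncation levels, so by induction on n their distance
   to the closed formula contracts by q^n <= 1/2 up to a vanishing error. *)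

Section SeqBijection.

Variables (R : Type) (idx : R) (op : Monoid.com_law idx).
Variables (T1 T2 : eqType) (r1 : seq T1) (r2 : seq T2) (P1 : pred T1) (P2 : pred T2).
Variables (f : T1 -> T2) (g : T2 -> T1) (F1 : T1 -> R) (F2 : T2 -> R).

Lemma big_seq_bij :
  uniq r1 -> uniq r2 ->
  (forall x, x \in r1 -> P1 x -> [/\ f x \in r2, P2 (f x), g (f x) = x & F1 x = F2 (f x)]) ->
  (forall y, y \in r2 -> P2 y -> [/\ g y \in r1, P1 (g y) & f (g y) = y]) ->
  \big[op/idx]_(x <- r1 | P1 x) F1 x = \big[op/idx]_(y <- r2 | P2 y) F2 y.
Proof.
move=> u1 u2 Hf Hg; rewrite -[LHS]big_filter -[RHS]big_filter.
transitivity (\big[op/idx]_(x <- filter P1 r1) F2 (f x)).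
  by apply: eq_big_seq => x; rewrite mem_filter => /andP[p1 r]; case: (Hf x r p1).
transitivity (\big[op/idx]_(y <- map f (filter P1 r1)) F2 y); first by rewrite big_map.
apply: perm_big; apply: uniq_perm.
- rewrite map_inj_in_uniq ?filter_uniq // => x y.
  rewrite !mem_filter => /andP[px rx] /andP[py ry] e.
  by case: (Hf x rx px) => _ _ <- _; case: (Hf y ry py) => _ _ <- _; rewrite e.
- by rewrite filter_uniq.
move=> y; apply/mapP/idP => [[x] | ].
  by rewrite !mem_filter => /andP[px rx] ->; case: (Hf x rx px) => -> -> _ _.
rewrite mem_filter => /andP[py ry]; case: (Hg y ry py) => r p e.
by exists (g y) => //; rewrite mem_filter p r.
Qed.

End SeqBijection.

Arguments big_seq_bij {R idx op T1 T2 r1 r2 P1 P2} f g {F1 F2}.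

Section Convergence.

Variable R : archiRealFieldType.

Definition cvg_to (u : nat -> R) (l : R) := forall eps : R, 0 < eps ->
  exists N0 : nat, forall N : nat, (N0 <= N)%N -> `|u N - l| < eps.

Lemma cvg_toD0 u v : cvg_to u 0 -> cvg_to v 0 -> cvg_to (fun N => u N + v N) 0.
Proof.
move=> cu cv eps e0.
have e2 : 0 < eps / 2 by rewrite divr_gt0.
case: (cu _ e2) => Nu Hu; case: (cv _ e2) => Nv Hv.
exists (maxn Nu Nv) => N; rewrite geq_max => /andP[lu lv].
rewrite subr0 (splitr eps); apply: le_lt_trans (ler_normD _ _) _.
by apply: ltrD; [have := Hu N lu | have := Hv N lv]; rewrite subr0.
Qed.

Lemma cvg_to_sum0 k (u : 'I_k -> nat -> R) :
  (forall i, cvg_to (u i) 0) -> cvg_to (fun N => \sum_(i < k) u i N) 0.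
Proof.
elim: k u => [|k IH] u cu.
  by move=> eps e0; exists 0%N => N _; rewrite big_ord0 subr0 normr0.
have := cvg_toD0 (IH (fun i => u (widen_ord (leqnSn k) i)) (fun i => cu _)) (cu ord_max).
move=> c eps e0; case: (c _ e0) => N0 HN; exists N0 => N /HN.
by rewrite big_ord_recr.
Qed.

Lemma cvg_toMl0 c u : `|c| <= 1 -> cvg_to u 0 -> cvg_to (fun N => c * u N) 0.
Proof.
move=> c1 cu eps e0; case: (cu _ e0) => N0 HN; exists N0 => N /HN.
by rewrite !subr0 normrM; apply: le_lt_trans; apply: ler_piMl.
Qed.

Lemma cvg_to_subn u l k : cvg_to u l -> cvg_to (fun N => u (N - k)%N) l.
Proof.
move=> cu eps e0; case: (cu _ e0) => N0 HN; exists (N0 + k)%N => N le; apply: HN.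
by rewrite -(leq_add2r k) subnK // (leq_trans (leq_addl _ _) le).
Qed.

Lemma cvg_to_subr u l : cvg_to u l -> cvg_to (fun N => u N - l) 0.
Proof. by move=> cu eps e0; case: (cu _ e0) => N0 HN; exists N0 => N /HN; rewrite subr0. Qed.

Lemma exprVn2_small E eps : 0 <= E -> 0 < eps -> exists K : nat, (2 : R)^-1 ^+ K * E < eps.
Proof.
move=> E0 e0; have x0 : 0 <= E / eps by rewrite divr_ge0 // ltW.
have := archi_boundP x0; set K := Num.Def.archi_bound _ => lt.
exists K; rewrite exprVn mulrC.
have p0 : 0 < (2 : R) ^+ K by rewrite exprn_gt0.
rewrite ltr_pdivrMr //; move: lt; rewrite ltr_pdivrMr // => lt.
apply: lt_le_trans lt _; rewrite mulrC; apply: ler_wpM2l; first exact: ltW.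
by rewrite -natrX ler_nat ltnW // ltn_expl.
Qed.

(* Once |d_N| <= delta for N >= N1, the error e_N = u_N - l satisfies
   |e_(N1+k)| <= 2^-k |e_N1| + 2 delta. *)
Lemma cvg_to_contraction u l q d : 0 <= q -> q <= (2 : R)^-1 ->
  (forall N, u N.+1 - l = q * (u N - l) + d N) -> cvg_to d 0 -> cvg_to u l.
Proof.
move=> q0 qh rec cd eps e0.
have e4 : 0 < eps / 4 by rewrite divr_gt0.
case: (cd _ e4) => N1 HN1.
set E := `|u N1 - l|.
have E0 : 0 <= E by exact: normr_ge0.
have err_bound k : `|u (N1 + k)%N - l| <= 2^-1 ^+ k * E + 2 * (eps / 4).
  elim: k => [|k IH]; first by rewrite addn0 expr0 mul1r lerDl mulr_ge0 // ltW.
  rewrite addnS rec; apply: le_trans (ler_normD _ _) _.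
  have dk : `|d (N1 + k)%N| <= eps / 4.
    by have := HN1 (N1 + k)%N (leq_addr _ _); rewrite subr0 => /ltW.
  have qe : q * `|u (N1 + k)%N - l| <= 2^-1 * (2^-1 ^+ k * E + 2 * (eps / 4)).
    by apply: ler_pM => //; exact: le_trans q0 qh.
  rewrite normrM (ger0_norm q0) exprS; apply: le_trans (lerD qe dk) _.
  by rewrite mulrDr mulrA -addrA lerD2l mulKf ?pnatr_eq0 // mulr_natl mulr2n.
case: (exprVn2_small E0 (_ : 0 < eps / 2)) => [|K HK]; first by rewrite divr_gt0.
exists (N1 + K)%N => N le; rewrite -(subnKC (leq_trans (leq_addr _ _) le)).
apply: le_lt_trans (err_bound _) _.
have hK : 2^-1 ^+ (N - N1) * E <= 2^-1 ^+ K * E.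
  apply: ler_wpM2r => //; apply: ler_wiXn2l; rewrite ?invr_ge0 ?invf_le1 ?ler1n //.
  by rewrite leq_subRL ?(leq_trans (leq_addr _ _) le).
have -> : 2 * (eps / 4) = eps / 2 by field.
rewrite [X in _ < X](splitr eps).
by apply: le_lt_trans (lerD hK (lexx _)) _; rewrite ltr_leD.
Qed.

End Convergence.

Lemma big_lift_perm0 (R : Type) (idx : R) (op : Monoid.com_law idx) n (i : 'I_n.+1)
    (F : 'S_n.+1 -> R) :
  \big[op/idx]_(s : 'S_n.+1 | s ord0 == i) F s =
  \big[op/idx]_(s : 'S_n) F (lift_perm ord0 i s).
Proof.
rewrite (reindex (lift_perm ord0 i)); last first.
  (* The inverse removes j from the domain and s j from the codomain. *)
  pose delete j (s : 'S_n.+1) k := odflt k (unlift (s j) (s (lift j k))).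
  have deleteK j (s : 'S_n.+1) k : lift (s j) (delete j s k) = s (lift j k).
    rewrite /delete; have:= neq_lift j k.
    by rewrite -(can_eq (permK s)) => /unlift_some[] ? ? ->.
  have delete_inj : injective (delete ord0 _).
    move=> s; apply: can_inj (delete (s ord0) s^-1%g) _ => k'.
    by rewrite {1}/delete deleteK !permK liftK.
  exists (fun s => perm (delete_inj s)) => [s _ | s].
    by apply/permP=> k'; rewrite permE /delete lift_perm_lift lift_perm_id liftK.
  move/(s _ =P _) => si0; apply/permP=> k.
  case: (unliftP ord0 k) => [k'|] ->; rewrite ?lift_perm_id //.
  by rewrite lift_perm_lift -si0 permE deleteK.
by apply: eq_bigl => s; rewrite lift_perm_id eqxx.
Qed.

Section PermWeightSum.

Variables (R : comPzSemiRingType) (x : R).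

Definition perm_weight_sum n (g : 'I_n -> nat) : R :=
  \sum_(sigma : 'S_n) \prod_(i < n) x ^+ ((n.-1 - i) * g (sigma i)).

Lemma perm_weight_sum_recl n (g : 'I_n.+1 -> nat) :
  perm_weight_sum g =
  \sum_(i < n.+1) x ^+ (n * g i) * perm_weight_sum (fun k => g (lift i k)).
Proof.
rewrite /perm_weight_sum (partition_big (fun s : 'S_n.+1 => s ord0) predT) //=.
apply: eq_bigr => i _; rewrite big_lift_perm0 big_distrr /=.
apply: eq_bigr => s _; rewrite big_ord_recl lift_perm_id subn0; congr (_ * _).
apply: eq_bigr => k _; rewrite lift_perm_lift /= /bump /=.
by rewrite subnDA subn1.
Qed.

End PermWeightSum.

Local Notation inv2 := ((2%:R : rat)^-1).

Lemma one_sub_inv2X_neq0 k : 1 - inv2 ^+ k.+1 != 0.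
Proof. by rewrite subr_eq0 eq_sym lt_eqF // exprn_ilt1. Qed.

Definition rhs_const m : rat :=
  inv2 ^+ ('C(m.+1, 2)).-1 / \prod_(1 <= i < m) (1 - inv2 ^+ (m.+1 - i)).

Lemma rhs_formulaE n (g : 'I_n -> nat) :
  rhs_formula g = rhs_const n * perm_weight_sum inv2 g.
Proof. by []. Qed.

Lemma rhs_const_rec n : rhs_const n.+1 * (1 - inv2 ^+ n.+1) = inv2 ^+ n.+1 * rhs_const n.
Proof.
case: n => [|n].
  by rewrite /rhs_const !big_geq // !divr1 mulr1 expr0 expr1 mulr1.
rewrite /rhs_const big_nat_recl // subn1.
have -> : \prod_(1 <= i < n.+1) (1 - inv2 ^+ (n.+3 - i.+1)) =
          \prod_(1 <= i < n.+1) (1 - inv2 ^+ (n.+2 - i)).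
  by apply: eq_bigr => i _; rewrite subSS.
have -> : ('C(n.+3, 2)).-1 = (('C(n.+2, 2)).-1 + n.+2)%N.
  by rewrite binS bin1; case: 'C(n.+2, 2) (bin_gt0 n.+2 2).
rewrite exprD invfM /= -[LHS]mulrA [_ * (1 - _)]mulrC mulVKf ?one_sub_inv2X_neq0 //.
by ring.
Qed.

Lemma rhs_formula_rec n (g : 'I_n.+1 -> nat) :
  rhs_formula g = inv2 ^+ n.+1 * rhs_formula g +
    \sum_(i < n.+1) (inv2 * (inv2 ^+ (g i).+1) ^+ n) * rhs_formula (fun k => g (lift i k)).
Proof.
suff -> : \sum_(i < n.+1) (inv2 * (inv2 ^+ (g i).+1) ^+ n) *
            rhs_formula (fun k => g (lift i k)) = rhs_formula g * (1 - inv2 ^+ n.+1).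
  by rewrite mulrBr mulr1 [rhs_formula g * _]mulrC addrC subrK.
rewrite rhs_formulaE mulrAC rhs_const_rec perm_weight_sum_recl mulr_sumr.
apply: eq_bigr => i _; rewrite rhs_formulaE.
have -> : inv2 * (inv2 ^+ (g i).+1) ^+ n = inv2 ^+ n.+1 * inv2 ^+ (n * g i).
  by rewrite -exprM -exprS -exprD mulSn mulnC addSn.
by ring.
Qed.

Lemma intervals_disjointP m (g s : 'I_m -> nat) :
  reflect (forall i j, i != j -> (s i + g i < s j)%N || (s j + g j < s i)%N)
          (intervals_disjoint g s).
Proof.
apply: (iffP forallP) => [H i j ij | H i].
  by move/forallP: (H i) => /(_ j) /implyP; apply.
by apply/forallP => j; apply/implyP; exact: H.
Qed.

(* Truncated configurations as plain nat-valued functions, so that the shifts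
   below can move between different truncation levels. *)
Definition box_seq m N : seq {ffun 'I_m -> nat} :=
  map (fun s : {ffun 'I_m -> 'I_N} => [ffun i => nat_of_ord (s i)]) (enum {ffun 'I_m -> 'I_N}).

Lemma box_seq_uniq m N : uniq (box_seq m N).
Proof.
rewrite map_inj_uniq ?enum_uniq // => s t e; apply/ffunP => i; apply: val_inj.
by have := congr1 (fun u : {ffun 'I_m -> nat} => u i) e; rewrite /= !ffunE.
Qed.

Lemma mem_box_seq m N u : (u \in box_seq m N) = [forall i, u i < N]%N.
Proof.
apply/mapP/forallP => [[s _ ->] i | H]; first by rewrite ffunE.
exists [ffun i => Ordinal (H i)]; first by rewrite mem_enum.
by apply/ffunP => i; rewrite !ffunE.
Qed.

Lemma trunc_probE m (g : 'I_m -> nat) N :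
  trunc_prob g N = \sum_(u <- box_seq m N | intervals_disjoint g u) point_prob u.
Proof.
rewrite /trunc_prob big_map big_enum_cond /=; apply: eq_big => s.
  by apply: eq_forallb => i; apply: eq_forallb => j; rewrite !ffunE.
by move=> _; rewrite /point_prob; apply: eq_bigr => i _; rewrite ffunE.
Qed.

(* At most one of pairwise disjoint intervals can start at 0. *)
Lemma sum_disjoint_split0 m (g : 'I_m -> nat) (r : seq {ffun 'I_m -> nat}) :
  \sum_(u <- r | intervals_disjoint g u) point_prob u =
  \sum_(u <- r | intervals_disjoint g u && [forall i, 0 < u i]%N) point_prob u +
  \sum_(i < m) \sum_(u <- r | intervals_disjoint g u && (u i == 0%N)) point_prob u.
Proof.
rewrite (eq_bigr (fun i => \sum_(u <- r)
   (if intervals_disjoint g u && (u i == 0%N) then point_prob u else 0))); last first.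
  by move=> i _; rewrite big_mkcond.
rewrite exchange_big /= [LHS]big_mkcond [X in X + _]big_mkcond -big_split /=.
apply: eq_bigr => u _.
case: (boolP (intervals_disjoint g u)) => D /=; last by rewrite add0r big1.
case: (boolP [forall i, 0 < u i]%N) => A.
  rewrite big1 ?addr0 // => i _.
  by move/forallP: A => /(_ i); rewrite lt0n => /negbTE ->.
move/forallPn: A => [i0]; rewrite lt0n negbK => ui0.
rewrite add0r (bigD1 i0) //= ui0 big1 ?addr0 // => j ji0.
move/intervals_disjointP: D => /(_ i0 j); rewrite eq_sym ji0 (eqP ui0) ltn0 orbF.
by case: (u j) => // /(_ isT).
Qed.

Lemma sum_disjoint_pos_shift m (g : 'I_m -> nat) N :
  \sum_(u <- box_seq m N.+1 | intervals_disjoint g u && [forall i, 0 < u i]%N) point_prob u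
  = inv2 ^+ m * \sum_(v <- box_seq m N | intervals_disjoint g v) point_prob v.
Proof.
rewrite big_distrr /=.
apply: (big_seq_bij (fun u : {ffun 'I_m -> nat} => [ffun i => (u i).-1])
                    (fun v : {ffun 'I_m -> nat} => [ffun i => (v i).+1]));
  rewrite ?box_seq_uniq //.
- move=> u; rewrite mem_box_seq => /forallP ltuN /andP[D /forallP u_gt0]; split.
  + rewrite mem_box_seq; apply/forallP => i; rewrite ffunE.
    by have := ltuN i; have := u_gt0 i; case: (u i).
  + apply/intervals_disjointP => i j ij; rewrite !ffunE.
    move/intervals_disjointP: D => /(_ i j ij).
    by have := u_gt0 i; have := u_gt0 j; case: (u i) => // a; case: (u j).
  + by apply/ffunP => i; rewrite !ffunE; have := u_gt0 i; case: (u i).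
  + rewrite -[in inv2 ^+ m](card_ord m) -prodr_const /point_prob -big_split.
    apply: eq_bigr => i _; rewrite ffunE /= -exprS.
    by have := u_gt0 i; case: (u i).
- move=> v; rewrite mem_box_seq => /forallP ltvN D; split.
  + by rewrite mem_box_seq; apply/forallP => i; rewrite ffunE ltnS.
  + apply/andP; split; last by apply/forallP => i; rewrite ffunE.
    apply/intervals_disjointP => i j ij; rewrite !ffunE !addSn !ltnS.
    by move/intervals_disjointP: D; apply.
  + by apply/ffunP => i; rewrite !ffunE.
Qed.

Lemma sum_disjoint_start0 m (g : 'I_m.+1 -> nat) N i :
  \sum_(u <- box_seq m.+1 N.+1 | intervals_disjoint g u && (u i == 0%N)) point_prob u =
  (inv2 * (inv2 ^+ (g i).+1) ^+ m) *
  \sum_(v <- box_seq m (N - g i) | intervals_disjoint (fun k => g (lift i k)) v) point_prob v.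
Proof.
rewrite big_distrr /=.
apply: (big_seq_bij
  (fun u : {ffun 'I_m.+1 -> nat} => [ffun j => u (lift i j) - (g i).+1]%N)
  (fun v : {ffun 'I_m -> nat} =>
     [ffun k => if unlift i k is Some j then v j + (g i).+1 else 0]%N));
  rewrite ?box_seq_uniq //.
- move=> u; rewrite mem_box_seq => /forallP ltuN /andP[D /eqP ui0].
  have le_gu j : ((g i).+1 <= u (lift i j))%N.
    by move/intervals_disjointP: D => /(_ i (lift i j) (neq_lift _ _)); rewrite ui0 orbF.
  split.
  + rewrite mem_box_seq; apply/forallP => j; rewrite ffunE.
    by have := le_gu j; have := ltuN (lift i j); move: (u _) => x; lia.
  + apply/intervals_disjointP => j j' jj'; rewrite !ffunE.
    move/intervals_disjointP: D => /(_ (lift i j) (lift i j')).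
    rewrite (inj_eq (@lift_inj _ i)) jj' => /(_ isT).
    by have := le_gu j; have := le_gu j'; move: (u (lift i j)) (u (lift i j')) => x y; lia.
  + apply/ffunP => k; rewrite ffunE; case: (unliftP i k) => [j|] ->.
      by rewrite ffunE subnK.
    by rewrite ui0.
  + rewrite /point_prob (bigD1_ord i) //= ui0 expr1 -mulrA; congr (_ * _).
    rewrite -[in _ ^+ m](card_ord m) -prodr_const -big_split.
    by apply: eq_bigr => j _; rewrite ffunE /= -exprD addnS subnKC.
- move=> v; rewrite [v \in _]mem_box_seq => /forallP ltvN D; split.
  + rewrite mem_box_seq; apply/forallP => k; rewrite ffunE.
    by case: (unliftP i k) => [j|] _ //; have := ltvN j; move: (v j) => x; lia.
  + apply/andP; split; last by rewrite ffunE unlift_none.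
    apply/intervals_disjointP => k k'; rewrite !ffunE.
    case: (unliftP i k) => [j|] ->; case: (unliftP i k') => [j'|] -> //=; last by rewrite eqxx.
    * rewrite (inj_eq (@lift_inj _ i)) => /(intervals_disjointP _ _ D) /=.
      by move: (v j) (v j') => x y; lia.
    * by move=> _; move: (v _) => x; lia.
    * by move=> _; move: (v _) => x; lia.
  + by apply/ffunP => j; rewrite !ffunE liftK addnK.
Qed.

Lemma trunc_prob_rec m (g : 'I_m.+1 -> nat) N :
  trunc_prob g N.+1 = inv2 ^+ m.+1 * trunc_prob g N +
    \sum_(i < m.+1) (inv2 * (inv2 ^+ (g i).+1) ^+ m) * trunc_prob (fun k => g (lift i k)) (N - g i).
Proof.
rewrite !trunc_probE sum_disjoint_split0 sum_disjoint_pos_shift; congr (_ + _).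
by apply: eq_bigr => i _; rewrite sum_disjoint_start0 trunc_probE.
Qed.

Lemma trunc_prob0 (g : 'I_0 -> nat) N : trunc_prob g N = 1.
Proof.
rewrite /trunc_prob (big_pred1 (ffun0 (card_ord 0))) => [|s].
  by rewrite /point_prob big_ord0.
have -> : s = ffun0 (card_ord 0) by apply/ffunP => -[].
by rewrite /= eqxx; apply/forallP => -[].
Qed.

Lemma rhs_formula0 (g : 'I_0 -> nat) : rhs_formula g = 1.
Proof.
rewrite /rhs_formula big_geq // invr1 mulr1 expr0 mul1r.
rewrite (eq_bigr (fun _ => 1)) => [|s _]; last by rewrite big_ord0.
by rewrite sumr_const card_Sn.
Qed.

Lemma cvg_to_trunc_prob n (g : 'I_n -> nat) : cvg_to (trunc_prob g) (rhs_formula g).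
Proof.
elim: n g => [|n IH] g.
  by move=> eps e0; exists 0%N => N _; rewrite trunc_prob0 rhs_formula0 subrr normr0.
pose c (i : 'I_n.+1) := inv2 * (inv2 ^+ (g i).+1) ^+ n.
pose err (i : 'I_n.+1) N :=
  trunc_prob (fun k => g (lift i k)) (N - g i) - rhs_formula (fun k => g (lift i k)).
apply: (@cvg_to_contraction _ _ _ (inv2 ^+ n.+1) (fun N => \sum_(i < n.+1) c i * err i N)).
- exact: exprn_ge0.
- by rewrite exprS ler_piMr // exprn_ile1.
- move=> N; rewrite trunc_prob_rec [in LHS](rhs_formula_rec g).
  by rewrite (eq_bigr _ (fun i _ => mulrBr _ _ _)) sumrB mulrBr opprD addrACA.
- apply: cvg_to_sum0 => i; apply: cvg_toMl0.
    by rewrite /c -exprM -exprS ger0_norm ?exprn_ge0 ?exprn_ile1.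
  exact/cvg_to_subr/cvg_to_subn/IH.
Qed.

Theorem theorem2 (n : nat) (hn : (1 <= n)%N) (gamma : 'I_n -> nat) :
  prob_A_eq gamma (rhs_formula gamma).
Proof. exact: cvg_to_trunc_prob. Qed.
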